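(* Let $\delta$ be a natural number and let $\xi,Y$ be real numbers with $1\le\xi\le Y^\delta$. Then there exist positive real numbers $x_1,\dots,x_\delta$ such that \[ \prod_{n=1}^\delta x_n=\xi,\qquad \min\bigl(\xi^{2^n/(2^{\delta+1}-2)},\,Y^{2^n/2^\delta}\bigr)\le x_n\le Y\quad(1\le n\le\delta). \] *)

From Stdlib Require Export Reals.
Open Scope R_scope.

Fixpoint prod_from1 (x : nat -> R) (d : nat) : R :=
  match d with
  | O => 1
  | S d' => prod_from1 x d' * x (S d')
  end.

(** Taking logarithms, with [L = ln xi] and [M = ln Y], one has to split
    [0 <= L <= delta * M] into [delta] parts [l n <= M] with
    [l n >= min (L * 2^n / (2^(delta+1) - 2), M * 2^n / 2^delta)].
    Water-filling does this for any nondecreasing positive weights [w]: share [L]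
    proportionally to [w]; if the largest share exceeds the cap [M], fix it at [M]
    and share [L - M] among the remaining parts, whose proportionality factor can
    only grow, so that every part keeps at least [min (L * w n / sum w, M)]. *)

From Stdlib Require Import Reals Lra Lia.
Open Scope R_scope.

Fixpoint sum_from1 (x : nat -> R) (d : nat) : R :=
  match d with
  | O => 0
  | S d' => sum_from1 x d' + x (S d')
  end.

Lemma sum_from1_ext (f g : nat -> R) (k : nat) :
  (forall n, (1 <= n <= k)%nat -> f n = g n) -> sum_from1 f k = sum_from1 g k.
Proof.
  induction k as [|k IH]; intros Hfg; simpl; [reflexivity|].
  rewrite IH, Hfg by (intros; try apply Hfg; lia). reflexivity.
Qed.

Lemma sum_from1_scal (c : R) (f : nat -> R) (k : nat) :
  sum_from1 (fun n => c * f n) k = c * sum_from1 f k.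
Proof. induction k as [|k IH]; simpl; [|rewrite IH]; ring. Qed.

Lemma sum_from1_nonneg (f : nat -> R) (k : nat) :
  (forall n, (1 <= n <= k)%nat -> 0 <= f n) -> 0 <= sum_from1 f k.
Proof.
  induction k as [|k IH]; intros Hf; simpl; [lra|].
  assert (0 <= f (S k)) by (apply Hf; lia).
  assert (0 <= sum_from1 f k) by (apply IH; intros; apply Hf; lia).
  lra.
Qed.

Lemma sum_from1_pos (f : nat -> R) (k : nat) :
  (forall n, (1 <= n <= k)%nat -> 0 < f n) -> (1 <= k)%nat -> 0 < sum_from1 f k.
Proof.
  induction k as [|k IH]; intros Hf Hk; simpl; [lia|].
  assert (0 < f (S k)) by (apply Hf; lia).
  destruct k as [|k]; [simpl; lra|].
  assert (0 < sum_from1 f (S k)) by (apply IH; [intros; apply Hf|]; lia).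
  lra.
Qed.

Lemma sum_from1_pow2 (k : nat) : sum_from1 (fun n => 2 ^ n) k = 2 ^ S k - 2.
Proof. induction k as [|k IH]; simpl in *; [|rewrite IH]; ring. Qed.

Lemma prod_from1_exp (l : nat -> R) (k : nat) :
  prod_from1 (fun n => exp (l n)) k = exp (sum_from1 l k).
Proof.
  induction k as [|k IH]; simpl; [now rewrite exp_0|].
  now rewrite IH, exp_plus.
Qed.

Lemma ln_le (x y : R) : 0 < x -> x <= y -> ln x <= ln y.
Proof. intros Hx [Hxy | <-]; [left; now apply ln_increasing | lra]. Qed.

Lemma exp_le (x y : R) : x <= y -> exp x <= exp y.
Proof. intros [Hxy | <-]; [left; now apply exp_increasing | lra]. Qed.

Lemma Rmin_exp (x y : R) : Rmin (exp x) (exp y) = exp (Rmin x y).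
Proof.
  destruct (Rle_dec x y) as [Hxy | Hyx].
  - now rewrite !Rmin_left by (try apply exp_le; lra).
  - now rewrite !Rmin_right by (try apply exp_le; lra).
Qed.

Lemma water_level_rises (W w c L M : R) :
  0 < W -> c * (W + w) = L -> M < c * w -> c <= (L - M) / W.
Proof.
  intros HW Hc HM.
  apply Rmult_le_reg_r with W; [lra|].
  unfold Rdiv; rewrite Rmult_assoc, Rinv_l, Rmult_1_r by lra.
  lra.
Qed.

Lemma water_filling (k : nat) (w : nat -> R) (M L : R) :
  (forall n, (1 <= n <= k)%nat -> 0 < w n) ->
  (forall n m, (1 <= n <= m)%nat -> (m <= k)%nat -> w n <= w m) ->
  0 <= L -> L <= INR k * M ->
  exists l : nat -> R, sum_from1 l k = L /\
    forall n, (1 <= n <= k)%nat -> Rmin (L / sum_from1 w k * w n) M <= l n <= M.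
Proof.
  revert M L; induction k as [|k IH]; intros M L Hpos Hmon HL HLk.
  { exists (fun _ => 0); split; [simpl in *; lra | lia]. }
  set (c := L / sum_from1 w (S k)).
  assert (HW : 0 < sum_from1 w (S k)) by (apply sum_from1_pos; [easy | lia]).
  assert (Hc : c * sum_from1 w (S k) = L) by (unfold c; field; lra).
  assert (Hc0 : 0 <= c) by (unfold c; apply Rmult_le_pos; [|left; apply Rinv_0_lt_compat]; lra).
  assert (Hwk : 0 < w (S k)) by (apply Hpos; lia).
  destruct (Rle_dec (c * w (S k)) M) as [Hfits | Hover].
  - exists (fun n => c * w n); split; [now rewrite sum_from1_scal|].
    intros n Hn; split; [apply Rmin_l|].
    apply Rle_trans with (c * w (S k)); [|easy].
    apply Rmult_le_compat_l; [easy | apply Hmon; lia].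
  - apply Rnot_le_lt in Hover.
    assert (HkL : M < L).
    { assert (0 <= sum_from1 w k) by (apply sum_from1_nonneg; intros; left; apply Hpos; lia).
      simpl in Hc; nra. }
    rewrite S_INR in HLk.
    destruct (IH M (L - M)) as [l [Hsum Hbound]];
      [intros; apply Hpos; lia | intros; apply Hmon; lia | lra | lra |].
    exists (fun n => if Nat.eqb n (S k) then M else l n); split.
    + simpl; rewrite Nat.eqb_refl, (sum_from1_ext _ l); [lra|].
      intros n Hn; replace (Nat.eqb n (S k)) with false by (symmetry; apply Nat.eqb_neq; lia).
      reflexivity.
    + intros n Hn; destruct (Nat.eqb_spec n (S k)) as [-> | Hnk]; [split; [apply Rmin_r | lra]|].
      destruct (Hbound n ltac:(lia)) as [Hlow Hup]; split; [|easy].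
      destruct k as [|k]; [lia|].
      assert (Hrise : c <= (L - M) / sum_from1 w (S k)).
      { apply water_level_rises with (w (S (S k))); [apply sum_from1_pos; [intros; apply Hpos|]; lia | easy | easy]. }
      eapply Rle_trans; [|exact Hlow].
      apply Rle_min_compat_r, Rmult_le_compat_r; [left; apply Hpos; lia | easy].
Qed.

Theorem lemma8 (delta : nat) (xi Y : R) (hY : 0 < Y)
  (h1 : 1 <= xi) (h2 : xi <= Y ^ delta) :
  exists x : nat -> R,
    (forall n : nat, (1 <= n <= delta)%nat -> 0 < x n) /\
    prod_from1 x delta = xi /\
    (forall n : nat, (1 <= n <= delta)%nat ->
       Rmin (Rpower xi (2 ^ n / (2 ^ (S delta) - 2)))
            (Rpower Y (2 ^ n / 2 ^ delta)) <= x n /\ x n <= Y).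
Proof.
  assert (HL : 0 <= ln xi) by (rewrite <- ln_1; apply ln_le; lra).
  assert (HLM : ln xi <= INR delta * ln Y) by (rewrite <- ln_pow by lra; apply ln_le; lra).
  destruct (water_filling delta (fun n => 2 ^ n) (ln Y) (ln xi)) as [l [Hsum Hbound]]; auto.
  { intros; apply pow_lt; lra. }
  { intros n m Hnm _; apply Rle_pow; [lra | lia]. }
  rewrite sum_from1_pow2 in Hbound.
  exists (fun n => exp (l n)); split; [|split].
  - intros; apply exp_pos.
  - now rewrite prod_from1_exp, Hsum, exp_ln by lra.
  - intros n Hn; destruct (Hbound n Hn) as [Hlow Hup].
    assert (HM : 0 <= ln Y) by (assert (1 <= INR delta) by (apply (le_INR 1); lia); nra).
    assert (Hpow : 2 ^ n <= 2 ^ delta) by (apply Rle_pow; [lra | lia]).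
    assert (H2d : 0 < 2 ^ delta) by (apply pow_lt; lra).
    assert (Hratio : 2 ^ n / 2 ^ delta * ln Y <= ln Y).
    { apply Rmult_le_reg_r with (2 ^ delta); [easy|].
      unfold Rdiv; rewrite Rmult_comm, <- !Rmult_assoc, Rinv_r_simpl_m by lra. nra. }
    split.
    + unfold Rpower; rewrite Rmin_exp; apply exp_le.
      eapply Rle_trans; [|exact Hlow].
      replace (2 ^ n / (2 ^ S delta - 2) * ln xi) with (ln xi / (2 ^ S delta - 2) * 2 ^ n)
        by (unfold Rdiv; ring).
      now apply Rle_min_compat_l.
    + rewrite <- (exp_ln Y) by lra; now apply exp_le.
Qed.
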